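(* Let $\Lambda$ denote the von Mangoldt function and let $\varepsilon>0$ be a small number. Then, as $x\to\infty$, \[ \sum_{n\leq x} \Lambda\left( [x/n]^2+1 \right) = a_2 x + O\left( x^{(2+\varepsilon)/3}\log^2 x \right), \] where the density constant is \[ a_2=\sum_{n\geq 1}\frac{\Lambda(n^2+1)}{n(n+1)}\geq 0.900076. \]
   Context: $[t]$ denotes the largest integer not exceeding $t$. The von Mangoldt function is $\Lambda(m)=\log p$ if $m=p^k$ for a prime $p$ and an integer $k\geq 1$, and $\Lambda(m)=0$ otherwise. The sum is over positive integers $n\le x$. *)

From HB Require Import structures.
From mathcomp Require Import all_boot all_order all_algebra.
From mathcomp Require Import all_classical all_reals all_analysis.
Set Implicit Arguments. Unset Strict Implicit. Unset Printing Implicit Defensive.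
Import Order.TTheory GRing.Theory Num.Theory numFieldNormedType.Exports.
Local Open Scope ring_scope.

(* von Mangoldt: Lambda(m) = log p if m = p^k, p prime, k >= 1, else 0.
   Written as a sum over all representations m = p^k (there is at most one). *)
Definition vonMangoldt (R : realType) (m : nat) : R :=
  \sum_(p < m.+1 | prime p) \sum_(1 <= k < m.+1 | (p ^ k == m)%N) ln (p%:R : R).

Definition flr (R : realType) (t : R) : nat := Num.truncn t.

Definition S2 (R : realType) (x : R) : R :=
  \sum_(1 <= n < (flr x).+1) vonMangoldt R ((flr (x / n%:R)) ^ 2 + 1)%N.

Definition a2_term (R : realType) (n : nat) : R :=
  vonMangoldt R (n ^ 2 + 1)%N / (n * n.+1)%:R.

(* Grouping the n <= N = [x] by the value m = [N/n] turns the sum into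
   sum_(m <= N) Λ(m^2+1) ([N/m] - [N/(m+1)]), while N a2 is, up to N times the
   tail of the series, sum_(m <= N) Λ(m^2+1) (N/m - N/(m+1)). These weights differ
   by less than 1 and Λ(m^2+1) <= 1 + 2 ln m, so the m <= M cost O(M ln N), both
   weighted sums over M < m <= N are O((N/M) ln N) by telescoping, and the tail of
   the series is O(ln N / N) by telescoping against (4 + 2 ln m)/m. Taking
   M = [sqrt N] gives the error O(sqrt x ln x), stronger than the stated bound.
   The lower bound on a2 comes from the terms with m <= 24 and m^2+1 prime. *)

From HB Require Import structures.
From mathcomp Require Import all_boot all_order all_algebra.
From mathcomp Require Import all_classical all_reals all_analysis.
From mathcomp Require Import ring lra.
Import Order.TTheory GRing.Theory Num.Theory numFieldNormedType.Exports.
Local Open Scope ring_scope.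

Section LnBounds.
Context {R : realType}.

Lemma ln_nat_ge0 (m : nat) : 0 <= ln (m%:R : R).
Proof. by case: m => [|m]; [rewrite ln0 | apply: ln_ge0; rewrite ler1n]. Qed.

Lemma subr_ln_ge (a b : R) : 0 < a -> 0 < b -> 1 - b / a <= ln a - ln b.
Proof.
move=> a_gt0 b_gt0; have ba_gt0 : 0 < b / a by rewrite divr_gt0.
have : ln (1 + (b / a - 1)) <= b / a - 1 by apply: le_ln1Dx; lra.
rewrite addrC subrK ln_div ?posrE //; lra.
Qed.

Lemma ln2_le1 : ln (2 : R) <= 1.
Proof.
have : ln (1 + 1 : R) <= 1 by apply: le_ln1Dx; lra.
by rewrite (_ : 1 + 1 = 2).
Qed.

(* From [2^19 < 3^12] and [3^5 < 2^8], weighted 5 : 12 so that [ln 3] cancels. *)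
Lemma ln2_ge : 6766 / 10000 <= ln (2 : R).
Proof.
have ln_pow_gap (a b : R) (m n : nat) : 0 < a -> 0 < b ->
    1 - b ^+ n / a ^+ m <= ln a *+ m - ln b *+ n.
  by move=> a_gt0 b_gt0; rewrite -!lnXn //; apply: subr_ln_ge; apply: exprn_gt0.
have := ln_pow_gap 3 2 12 19 ltac:(lra) ltac:(lra).
have := ln_pow_gap 2 3 8 5 ltac:(lra) ltac:(lra).
lra.
Qed.

End LnBounds.

Section VonMangoldt.
Variable R : realType.

Lemma vonMangoldt_prime_pow (p k : nat) : prime p -> (0 < k)%N ->
  vonMangoldt R (p ^ k) = ln p%:R.
Proof.
move=> p_pr k_gt0; have p_gt1 := prime_gt1 p_pr.
have p_lt : (p < (p ^ k).+1)%N by rewrite ltnS -{1}(expn1 p) leq_pexp2l // ltnW.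
rewrite /vonMangoldt (bigD1 (Ordinal p_lt)) //= [X in _ + X]big1 ?addr0.
  under eq_bigl => j do rewrite eqn_exp2l //.
  by rewrite big_nat1_eq k_gt0 ltnS ltnW // ltn_expl.
move=> q /andP[q_pr q_neq_p]; rewrite big1_seq // => j /andP[/eqP qjE].
rewrite mem_index_iota => /andP[j_gt0 _]; case/eqP: q_neq_p; apply: val_inj => /=.
have : (q %| p ^ k)%N by rewrite -[X in (_ %| X)%N]qjE dvdn_exp.
by rewrite Euclid_dvdX // dvdn_prime2 // => /andP[/eqP].
Qed.

Lemma vonMangoldt_ge0 (m : nat) : 0 <= vonMangoldt R m.
Proof. by apply: sumr_ge0 => q _; apply: sumr_ge0 => j _; exact: ln_nat_ge0. Qed.

Lemma vonMangoldt_le_ln (m : nat) : vonMangoldt R m <= ln m%:R.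
Proof.
have [[p [k [p_pr k_gt0 <-]]] | no_pow] :=
  pselect (exists p k, [/\ prime p, (0 < k)%N & p ^ k = m]%N).
  have p_gt0 := prime_gt0 p_pr.
  rewrite vonMangoldt_prime_pow // ler_ln ?posrE ?ltr0n ?expn_gt0 ?p_gt0 //.
  by rewrite ler_nat -{1}(expn1 p) leq_pexp2l.
rewrite /vonMangoldt big1 ?ln_nat_ge0 // => q q_pr.
rewrite big1_seq // => j /andP[/eqP qjE]; rewrite mem_index_iota => /andP[j_gt0 _].
by case: no_pow; exists q, j.
Qed.

End VonMangoldt.

Section Series.
Variable R : realType.
Local Notation Lam m := (vonMangoldt R (m ^ 2 + 1)%N).

Lemma vonMangoldt_sq1_le (m : nat) : (0 < m)%N -> Lam m <= 1 + 2 * ln (m%:R : R).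
Proof.
move=> m_gt0; have m_gt0' : (0 : R) < m%:R by rewrite ltr0n.
apply: (le_trans (vonMangoldt_le_ln _ _)).
have : ln (((m ^ 2 + 1)%N)%:R : R) <= ln (2 * m%:R ^+ 2).
  rewrite ler_ln ?posrE ?ltr0n ?addn1 ?mulr_gt0 ?exprn_gt0 //.
  by rewrite -natrX -natrM ler_nat ltn_Pmull // expn_gt0 m_gt0.
rewrite lnM ?posrE ?exprn_gt0 // lnXn // mulr_natl.
have := ln2_le1 (R:=R); lra.
Qed.

Lemma a2_term_ge0 (m : nat) : 0 <= a2_term R m.
Proof. by rewrite divr_ge0 ?vonMangoldt_ge0. Qed.

(* With [Lam m <= 1 + 2 ln m] and [m (ln (m + 1) - ln m) <= 1], the constant 4
   leaves room for [a2_term m <= a2_majorant m - a2_majorant m.+1]. *)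
Definition a2_majorant (m : nat) : R := (4 + 2 * ln (m%:R : R)) / m%:R.

Lemma a2_majorant_ge0 (m : nat) : 0 <= a2_majorant m.
Proof. by rewrite divr_ge0 //; have := ln_nat_ge0 (R:=R) m; lra. Qed.

Lemma a2_term_le_majorantB (m : nat) : (0 < m)%N ->
  a2_term R m <= a2_majorant m - a2_majorant m.+1.
Proof.
move=> m_gt0; have m_gt0' : (0 : R) < m%:R by rewrite ltr0n.
have majorantB : a2_majorant m - a2_majorant m.+1 = (4 + 2 * ln (m%:R : R)
    - 2 * (m%:R * (ln m.+1%:R - ln m%:R))) / (m * m.+1)%:R.
  by rewrite /a2_majorant natrM -natr1; field; rewrite !gt_eqF // ltr_pwDl.
have ln_step : m%:R * (ln (m.+1%:R : R) - ln m%:R) <= 1.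
  have := subr_ln_ge _ _ m_gt0' (ltr0Sn R m).
  rewrite -natr1 mulrDl divff ?gt_eqF // -ler_pdivlMl // mulr1; lra.
rewrite majorantB ler_wpM2r ?invr_ge0 //.
have := vonMangoldt_sq1_le m m_gt0; have := ln_nat_ge0 (R:=R) m; lra.
Qed.

Definition a2_partial : R^nat := series (fun n => a2_term R n.+1).

Lemma a2_partial_nondecreasing : nondecreasing_seq a2_partial.
Proof.
apply/nondecreasing_seqP => n.
by rewrite /a2_partial /series /= big_nat_recr //= lerDl a2_term_ge0.
Qed.

Lemma a2_partialB_le (K n : nat) : (K <= n)%N ->
  a2_partial n - a2_partial K <= a2_majorant K.+1 - a2_majorant n.+1.
Proof.
move=> Kn; rewrite /a2_partial /series /= (@big_cat_nat _ _ _ K 0 n) // /= addrC addrK.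
have -> : a2_majorant K.+1 - a2_majorant n.+1
    = \sum_(K <= k < n) (- a2_majorant k.+2 - - a2_majorant k.+1).
  by rewrite telescope_sumr // opprK addrC.
by apply: ler_sum_nat => k _; rewrite opprK addrC a2_term_le_majorantB.
Qed.

Lemma cvg_a2_partial : cvgn a2_partial.
Proof.
apply: nondecreasing_is_cvgn; first exact: a2_partial_nondecreasing.
exists (a2_majorant 1) => _ [n _ <-].
have := a2_partialB_le _ _ (leq0n n); have := a2_majorant_ge0 n.+1.
rewrite /a2_partial /series /= [\sum_(0 <= k < 0) _]big_geq //; lra.
Qed.

Lemma a2_partial_le_lim (n : nat) : a2_partial n <= limn a2_partial.
Proof. exact: nondecreasing_cvgn_le a2_partial_nondecreasing cvg_a2_partial n. Qed.

Lemma lim_a2_partial_le (K : nat) : limn a2_partial <= a2_partial K + a2_majorant K.+1.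
Proof.
apply: limr_le; first exact: cvg_a2_partial.
exists K => // n /= Kn; have := a2_partialB_le _ _ Kn; have := a2_majorant_ge0 n.+1; lra.
Qed.

End Series.

Lemma sum_leq_divn (N m : nat) : (0 < m)%N ->
  (\sum_(1 <= n < N.+1) (m <= N %/ n) = N %/ m)%N.
Proof.
move=> m_gt0.
under eq_big_nat => n /andP[n_gt0 _] do rewrite leq_divRL // mulnC -leq_divRL //.
transitivity (\sum_(1 <= n < (N %/ m).+1) 1)%N; last by rewrite sum_nat_const_nat muln1 subn1.
rewrite [RHS](big_nat_widen 1 _ N.+1 xpredT) ?ltnS ?leq_div // [RHS]big_mkcond.
by apply: eq_bigr => n _; rewrite ltnS.
Qed.

Lemma sum_eq_divn (N m : nat) : (0 < m)%N ->
  (\sum_(1 <= n < N.+1) (N %/ n == m) = N %/ m - N %/ m.+1)%N.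
Proof.
move=> m_gt0; rewrite -!sum_leq_divn // -sumnB => [|n _]; last first.
  by case: ltnP => // /ltnW ->.
by apply: eq_bigr => n _; case: ltngtP.
Qed.

Lemma sum_divn_quotients (V : nmodType) (F : nat -> V) (N : nat) :
  \sum_(1 <= n < N.+1) F (N %/ n)%N = \sum_(1 <= m < N.+1) F m *+ (N %/ m - N %/ m.+1).
Proof.
transitivity (\sum_(1 <= n < N.+1) \sum_(1 <= m < N.+1) F m *+ (N %/ n == m)%N).
  apply: eq_big_nat => n /andP[n_gt0]; rewrite ltnS => n_le.
  rewrite (bigD1_seq (N %/ n)%N) ?iota_uniq //=; last first.
    by rewrite mem_index_iota divn_gt0 // n_le ltnS leq_div.
  rewrite eqxx mulr1n big1 ?addr0 // => m /negPf m_neq.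
  by rewrite eq_sym m_neq mulr0n.
rewrite exchange_big_nat; apply: eq_big_nat => m /andP[m_gt0 _].
by rewrite sumrMnr sum_eq_divn.
Qed.

Section Floors.
Context {R : realType}.

Lemma divn_natr_itv (N d : nat) : (0 < d)%N ->
  (N %/ d)%:R <= (N%:R : R) / d%:R < (N %/ d)%:R + 1.
Proof.
move=> d_gt0; have d_gt0' : (0 : R) < d%:R by rewrite ltr0n.
rewrite ler_pdivlMr // ltr_pdivrMr // -!natrM natr1 -natrM ler_nat ltr_nat.
by rewrite leq_divM ltn_ceil.
Qed.

Lemma flr_div_nat (x : R) (n : nat) : 0 <= x -> (0 < n)%N ->
  flr (x / n%:R) = (flr x %/ n)%N.
Proof.
move=> x_ge0 n_gt0; have n_gt0' : (0 : R) < n%:R by rewrite ltr0n.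
have /andP[trunc_le trunc_gt] := truncn_itv x_ge0.
apply: truncn_def; rewrite ler_pdivlMr // ltr_pdivrMr // -!natrM.
apply/andP; split; first by apply: le_trans trunc_le; rewrite ler_nat leq_divM.
by apply: (lt_le_trans trunc_gt); rewrite ler_nat ltn_ceil.
Qed.

End Floors.

Section QuotientSumError.
Variables (R : realType) (N : nat).
Hypothesis N_gt0 : (0 < N)%N.

Local Notation Lam m := (vonMangoldt R (m ^ 2 + 1)%N).
Local Notation L := (1 + 2 * ln (N%:R : R)).
Local Notation floor_wt m := ((N %/ m - N %/ m.+1)%N%:R : R).
Local Notation real_wt m := (N%:R / (m * m.+1)%:R : R).
(* [floor_wt m] counts the [n <= N] with [N %/ n = m]; [real_wt m] is the
   weight [N / m - N / (m + 1)] of [m] in [N * a2]. *)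

Lemma vonMangoldt_sq1_le_L (m : nat) : (0 < m)%N -> (m <= N)%N -> Lam m <= L.
Proof.
move=> m_gt0 m_le; apply: (le_trans (vonMangoldt_sq1_le R m m_gt0)).
by rewrite lerD2l ler_pM2l // ler_ln ?posrE ?ltr0n ?ler_nat // (leq_trans m_gt0).
Qed.

Lemma quotient_sum_sub_partial :
  \sum_(1 <= n < N.+1) Lam (N %/ n)%N - N%:R * a2_partial R N
    = \sum_(1 <= m < N.+1) Lam m * (floor_wt m - real_wt m).
Proof.
rewrite (sum_divn_quotients _ (fun m => Lam m)) /a2_partial /series /= !big_add1 /=.
rewrite mulr_sumr -sumrB; apply: eq_bigr => m _.
by rewrite /a2_term -mulr_natr; ring.
Qed.

Lemma floor_wtE (m : nat) : (0 < m)%N -> floor_wt m = (N %/ m)%:R - (N %/ m.+1)%:R.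
Proof. by move=> m_gt0; rewrite natrB // leq_div2l. Qed.

Lemma real_wtE (m : nat) : (0 < m)%N -> real_wt m = N%:R / m%:R - N%:R / m.+1%:R.
Proof.
move=> m_gt0; rewrite natrM -natr1; field.
by rewrite !gt_eqF ?ltr0n // ltr_pwDl.
Qed.

Lemma weight_gap_le1 (m : nat) : (0 < m)%N -> `|floor_wt m - real_wt m| <= 1.
Proof.
move=> m_gt0; rewrite floor_wtE // real_wtE //.
have /andP[fl_m lt_m] := divn_natr_itv (R:=R) N m m_gt0.
have /andP[fl_m1 lt_m1] := divn_natr_itv (R:=R) N m.+1 (ltn0Sn m).
(* [lra] only sees the products [N * m^-1] as atoms once they are named. *)
set x := N%:R / m%:R in fl_m lt_m *; set y := N%:R / m.+1%:R in fl_m1 lt_m1 *.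
rewrite ler_norml; apply/andP; split; lra.
Qed.

Lemma head_error_le (M : nat) : (M <= N)%N ->
  `|\sum_(1 <= m < M.+1) Lam m * (floor_wt m - real_wt m)| <= L * M%:R.
Proof.
move=> M_le; apply: (le_trans (ler_norm_sum _ _ _)).
rewrite (_ : L * M%:R = \sum_(1 <= m < M.+1) L); last by rewrite sumr_const_nat subn1 mulr_natr.
apply: ler_sum_nat => m /andP[m_gt0 m_le].
rewrite normrM ger0_norm ?vonMangoldt_ge0 // -[L]mulr1.
apply: ler_pM; rewrite ?vonMangoldt_ge0 ?weight_gap_le1 //.
by apply: vonMangoldt_sq1_le_L; rewrite // (leq_trans _ M_le).
Qed.

Lemma tail_error_le (M : nat) : (M <= N)%N ->
  `|\sum_(M.+1 <= m < N.+1) Lam m * (floor_wt m - real_wt m)| <= L * (N%:R / M.+1%:R).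
Proof.
move=> M_le; have L_ge0 : 0 <= L by have := ln_nat_ge0 (R:=R) N; lra.
have tail_gt0 m : (M.+1 <= m)%N -> (0 < m)%N by apply: leq_trans.
have weighted_sum_le (wt : nat -> R) : (forall m, 0 <= wt m) ->
    \sum_(M.+1 <= m < N.+1) wt m <= N%:R / M.+1%:R ->
    0 <= \sum_(M.+1 <= m < N.+1) Lam m * wt m <= L * (N%:R / M.+1%:R).
  move=> wt_ge0 sum_wt_le; apply/andP; split.
    by apply: sumr_ge0 => m _; rewrite mulr_ge0 ?vonMangoldt_ge0.
  apply: le_trans (ler_wpM2l L_ge0 sum_wt_le); rewrite mulr_sumr.
  apply: ler_sum_nat => m /andP[M_lt m_lt]; rewrite ler_wpM2r //.
  by apply: vonMangoldt_sq1_le_L; rewrite ?tail_gt0 // -ltnS.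
have floor_sum : \sum_(M.+1 <= m < N.+1) floor_wt m = (N %/ M.+1)%:R.
  rewrite (eq_big_nat _ _ (F2 := fun m => - (N %/ m.+1)%:R - - (N %/ m)%:R)).
    by rewrite telescope_sumr // divn_small // oppr0 sub0r opprK.
  by move=> m /andP[M_lt _]; rewrite floor_wtE ?tail_gt0 // opprK addrC.
have real_sum : \sum_(M.+1 <= m < N.+1) real_wt m
    = N%:R / M.+1%:R - N%:R / N.+1%:R.
  rewrite (eq_big_nat _ _ (F2 := fun m => - (N%:R / m.+1%:R) - - (N%:R / m%:R))).
    by rewrite telescope_sumr // opprK addrC.
  by move=> m /andP[M_lt _]; rewrite real_wtE ?tail_gt0 // opprK addrC.
have /andP[floor_ge0 floor_le] : 0 <= \sum_(M.+1 <= m < N.+1) Lam m * floor_wt m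
    <= L * (N%:R / M.+1%:R).
  apply: weighted_sum_le => //; rewrite floor_sum.
  by have /andP[] := divn_natr_itv (R:=R) N M.+1 isT.
have /andP[real_ge0 real_le] : 0 <= \sum_(M.+1 <= m < N.+1) Lam m * real_wt m
    <= L * (N%:R / M.+1%:R).
  apply: weighted_sum_le => [m|]; first by rewrite divr_ge0.
  by rewrite real_sum gerBl divr_ge0.
under eq_bigr do rewrite mulrBr.
move: floor_le real_le; set bound := L * _ => floor_le real_le.
by rewrite sumrB ler_norml; apply/andP; split; lra.
Qed.

Lemma N_mul_a2_tail_le :
  0 <= N%:R * (limn (a2_partial R) - a2_partial R N) <= 4 + 2 * ln (N.+1%:R : R).
Proof.
have partial_le := a2_partial_le_lim R N; have lim_le := lim_a2_partial_le R N.
rewrite mulr_ge0 ?subr_ge0 //=.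
apply: (le_trans (ler_wpM2l (ler0n _ N) (_ : _ <= a2_majorant R N.+1))).
  by rewrite lerBlDl.
have maj_num_ge0 : 0 <= 4 + 2 * ln (N.+1%:R : R) by have := ln_nat_ge0 (R:=R) N.+1; lra.
by rewrite /a2_majorant mulrCA ler_piMr // ler_pdivrMr ?ltr0n // mul1r ler_nat.
Qed.

Lemma quotient_sum_error (M : nat) : (M <= N)%N ->
  `|\sum_(1 <= n < N.+1) Lam (N %/ n)%N - N%:R * limn (a2_partial R)|
    <= L * M%:R + L * (N%:R / M.+1%:R) + (4 + 2 * ln (N.+1%:R : R)).
Proof.
move=> M_le; have /andP[tail_ge0 tail_le] := N_mul_a2_tail_le.
rewrite (_ : _ - _ = \sum_(1 <= m < M.+1) Lam m * (floor_wt m - real_wt m)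
    + \sum_(M.+1 <= m < N.+1) Lam m * (floor_wt m - real_wt m)
    - N%:R * (limn (a2_partial R) - a2_partial R N)); last first.
  by rewrite -big_cat_nat // -quotient_sum_sub_partial; ring.
apply: (le_trans (ler_normB _ _)); rewrite [X in _ + X <= _]ger0_norm //.
apply: lerD => //; apply: (le_trans (ler_normD _ _)).
by apply: lerD; [exact: head_error_le | exact: tail_error_le].
Qed.

End QuotientSumError.

Section Asymptotics.
Variable R : realType.
Local Notation Lam m := (vonMangoldt R (m ^ 2 + 1)%N).
Local Notation a2 := (limn (a2_partial R)).

Lemma a2_ge0_le4 : 0 <= a2 <= 4.
Proof.
have := a2_partial_le_lim R 0; have := lim_a2_partial_le R 0.
rewrite /a2_partial /series /= big_geq // /a2_majorant ln1 divr1; lra.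
Qed.

Lemma S2E (x : R) : 0 <= x ->
  S2 x = \sum_(1 <= n < (flr x).+1) Lam (flr x %/ n)%N.
Proof. by move=> x_ge0; apply: eq_big_nat => n /andP[n_gt0 _]; rewrite flr_div_nat. Qed.

Lemma quotient_sum_error_sqrt (N : nat) : (0 < N)%N ->
  `|\sum_(1 <= n < N.+1) Lam (N %/ n)%N - N%:R * a2|
    <= 2 * (1 + 2 * ln (N%:R : R)) * Num.sqrt N%:R + (4 + 2 * ln (N.+1%:R : R)).
Proof.
move=> N_gt0; set s := Num.sqrt (N%:R : R).
have s_ge0 : 0 <= s := sqrtr_ge0 _.
have ssE : s * s = N%:R by rewrite -expr2 sqr_sqrtr.
have /andP[M_le M_gt] := truncn_itv s_ge0; set M := Num.truncn s in M_le M_gt.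
have s_ge1 : 1 <= s by rewrite -sqrtr1 ler_sqrt // ler1n.
have M_le_N : (M <= N)%N by rewrite -(ler_nat R) (le_trans M_le) // -ssE ler_peMl.
have L_ge0 : 0 <= 1 + 2 * ln (N%:R : R) by have := ln_nat_ge0 (R:=R) N; lra.
have N_div_le : N%:R / M.+1%:R <= s.
  by rewrite ler_pdivrMr ?ltr0n // -ssE ler_wpM2l // ltW.
apply: (le_trans (quotient_sum_error R N N_gt0 M M_le_N)); rewrite lerD2r.
apply: (le_trans (lerD (ler_wpM2l L_ge0 M_le) (ler_wpM2l L_ge0 N_div_le))).
by rewrite -mulrA [2 * (_ * s)]mulr_natl mulr2n.
Qed.

Lemma S2_sub_a2_le (x : R) : 4 <= x ->
  `|S2 x - a2 * x| <= 18 * (Num.sqrt x * ln x ^+ 2).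
Proof.
move=> x_ge4; have x_gt0 : 0 < x by lra.
rewrite S2E ?(ltW x_gt0) //; set N := flr x.
have /andP[N_le N_gt] : N%:R <= x < N.+1%:R := truncn_itv (ltW x_gt0).
have N_gt0 : (0 < N)%N by rewrite -(ltr_nat R); lra.
have /andP[a2_ge0 a2_le4] := a2_ge0_le4.
set l := ln x; set r := Num.sqrt x.
have l_ge1 : 1 <= l.
  have : ln 4 <= l by rewrite ler_ln ?posrE //; lra.
  rewrite (_ : 4 = 2 ^+ 2); last by rewrite expr2; lra.
  by rewrite lnXn //; have := ln2_ge (R:=R); lra.
have r_ge1 : 1 <= r by rewrite -sqrtr1 ler_sqrt; lra.
have lnN_le : ln (N%:R : R) <= l by rewrite ler_ln ?posrE ?ltr0n.
have lnN1_le : ln (N.+1%:R : R) <= 1 + l.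
  have : ln (N.+1%:R : R) <= ln (2 * x) by rewrite ler_ln ?posrE ?ltr0n ?mulr_gt0 //; lra.
  by rewrite lnM ?posrE // -/l; have := ln2_le1 (R:=R); lra.
have sqrtN_le : Num.sqrt (N%:R : R) <= r by rewrite /r ler_sqrt //; lra.
have error_le := quotient_sum_error_sqrt N N_gt0.
have head_le : 2 * (1 + 2 * ln (N%:R : R)) * Num.sqrt N%:R <= 2 * (1 + 2 * l) * r.
  have lnN_ge0 := ln_nat_ge0 (R:=R) N.
  by rewrite ler_pM ?sqrtr_ge0 //; lra.
rewrite (_ : _ - a2 * x = \sum_(1 <= n < N.+1) Lam (N %/ n)%N - N%:R * a2
    - a2 * (x - N%:R)); last by ring.
apply: (le_trans (ler_normB _ _)).
rewrite normrM (ger0_norm a2_ge0) (@ger0_norm _ (x - N%:R)) ?subr_ge0 //.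
have frac_le4 : a2 * (x - N%:R) <= 4 by nra.
have r_le : r <= r * l ^+ 2 by rewrite ler_peMr //; nra.
have rl_le : r * l <= r * l ^+ 2 by rewrite expr2 mulrA ler_peMr //; nra.
nra.
Qed.

End Asymptotics.

Section Numerics.
Variable R : realType.

Lemma a2_term_prime_ge (n p d j : nat) : prime p -> (n ^ 2 + 1)%N = p -> (n * n.+1)%N = d ->
  (ln 2 *+ j + 1 - (2 ^ j)%:R / p%:R) / d%:R <= a2_term R n.
Proof.
move=> p_pr pE dE; rewrite /a2_term pE dE -[p]expn1 vonMangoldt_prime_pow // expn1.
have p_gt0 : (0 : R) < p%:R by rewrite ltr0n prime_gt0.
have pow2_gt0 : (0 : R) < 2 ^+ j by rewrite exprn_gt0.
rewrite ler_wpM2r ?invr_ge0 // natrX -lnXn //.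
by have := subr_ln_ge _ _ p_gt0 pow2_gt0; lra.
Qed.

Lemma sum_filter_le_a2_partial (s : seq nat) (n : nat) :
  \sum_(k < n | k.+1 \in s) a2_term R k.+1 <= a2_partial R n.
Proof.
rewrite /a2_partial /series /= big_mkord [leRHS](bigID (fun k : 'I_n => k.+1 \in s)) /=.
by rewrite lerDl sumr_ge0 // => k _; apply: a2_term_ge0.
Qed.

(* The terms with [m ^ 2 + 1] prime, with [ln p >= j ln 2 + 1 - 2 ^ j / p]
   for [j] the binary logarithm of [p]. *)
Lemma a2_partial24_ge : 9001 / 10000 <= a2_partial R 24.
Proof.
apply: le_trans (sum_filter_le_a2_partial [:: 1; 2; 4; 6; 10; 14; 16; 20; 24] 24).
rewrite big_mkcond !big_ord_recr big_ord0 /=.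
have := a2_term_prime_ge 1 2 2 1 isT erefl erefl.
have := a2_term_prime_ge 2 5 6 2 isT erefl erefl.
have := a2_term_prime_ge 4 17 20 4 isT erefl erefl.
have := a2_term_prime_ge 6 37 42 5 isT erefl erefl.
have := a2_term_prime_ge 10 101 110 6 isT erefl erefl.
have := a2_term_prime_ge 14 197 210 7 isT erefl erefl.
have := a2_term_prime_ge 16 257 272 8 isT erefl erefl.
have := a2_term_prime_ge 20 401 420 8 isT erefl erefl.
have := a2_term_prime_ge 24 577 600 9 isT erefl erefl.
have := ln2_ge (R:=R).
lra.
Qed.

End Numerics.

Theorem theorem1p3 (R : realType) :
  let a2 : R := limn (series (fun n => a2_term R n.+1) : R^nat) in
  [/\ cvgn (series (fun n => a2_term R n.+1) : R^nat),
      (900076%:R / 1000000%:R : R) <= a2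
    & forall eps : R, 0 < eps ->
        exists C : R, exists X0 : R, forall x : R, X0 <= x ->
          `|S2 x - a2 * x| <= C * (x `^ ((2 + eps) / 3) * (ln x) ^+ 2)].
Proof.
move=> a2; split.
- exact: cvg_a2_partial.
- apply: le_trans (a2_partial_le_lim R 24); apply: le_trans (a2_partial24_ge R); lra.
- move=> eps eps_gt0; exists 18, 4 => x x_ge4.
  apply: (le_trans (S2_sub_a2_le R x x_ge4)); rewrite ler_wpM2l // ler_wpM2r ?sqr_ge0 //.
  by rewrite -powR12_sqrt ?ler_powR //; lra.
Qed.
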